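(* Fix a constant $p>2$ and a bounded open subset $\Omega\subset\mathbb{R}^2$ with area $|\Omega|$. Then for every integer $k\ge1$ there is a constant $c=c(k,|\Omega|)$ such that $$\|\partial_tu\cdot v\|_{\mathcal{W}^{k,p}}\le c\big(\|\partial_tu\|_{\mathcal{W}^{k,p}}\|v\|_\infty+\|u\|_{\mathcal{C}^k}\|v\|_{\mathcal{W}^{k,p}}\big)$$ for all functions $u,v\in C^\infty(\overline\Omega)$.
   Context: Coordinates on $\mathbb{R}^2$ are $(s,t)$. All norms are over $\Omega$: $\|w\|_{\mathcal{W}^{k,p}}=\big(\int_\Omega\sum_{2\nu+\mu\le2k}|\partial_s^\nu\partial_t^\mu w|^p\big)^{1/p}$ and the parabolic $\mathcal{C}^k$ norm is $\|w\|_{\mathcal{C}^k}=\sum_{2\nu+\mu\le2k}\|\partial_s^\nu\partial_t^\mu w\|_\infty$. *)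

From HB Require Import structures.
From mathcomp Require Import all_boot all_order all_algebra.
From mathcomp Require Import all_classical all_reals all_analysis.
Set Implicit Arguments. Unset Strict Implicit. Unset Printing Implicit Defensive.
Import Order.TTheory GRing.Theory Num.Theory.
Import numFieldNormedType.Exports.
Local Open Scope classical_set_scope.
Local Open Scope ring_scope.

Section Defs.
Context {R : realType}.

Definition ds (f : R * R -> R) : R * R -> R :=
  fun x => derive1 (fun s => f (s, x.2)) x.1.
Definition dt (f : R * R -> R) : R * R -> R :=
  fun x => derive1 (fun t => f (x.1, t)) x.2.

Definition pd (nu mu : nat) (f : R * R -> R) : R * R -> R :=
  iter nu ds (iter mu dt f).

Definition dword (w : seq bool) (f : R * R -> R) : R * R -> R :=
  foldr (fun b g => if b then ds g else dt g) f w.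

(* f is in C^infty(closure Omega): all iterated partial derivatives exist and
   are continuous in Omega, and each extends continuously to closure Omega. *)
Definition smooth_closure (Om : set (R * R)) (f : R * R -> R) : Prop :=
  forall w : seq bool,
    (forall x, Om x ->
       derivable (fun s => dword w f (s, x.2)) x.1 1 /\
       derivable (fun t => dword w f (x.1, t)) x.2 1 /\
       {for x, continuous (dword w f)}) /\
    exists g : R * R -> R,
      {within closure Om, continuous g} /\ forall x, Om x -> g x = dword w f x.

Definition leb2 := (@lebesgue_measure R \x @lebesgue_measure R)%E.

(* parabolic Sobolev norm W^{k,p}(Omega) *)
Definition wnorm (p : R) (k : nat) (Om : set (R * R)) (w : R * R -> R) : \bar R :=
  ((\int[leb2]_(x in Om)
     (\sum_(nu < k.+1) \sum_(mu < (2 * k).+1 | (2 * nu + mu <= 2 * k)%N)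
        `|pd nu mu w x| `^ p)%:E) `^ p^-1)%E.

(* sup norm over Omega (0 is included so the empty set has norm 0) *)
Definition supnorm (Om : set (R * R)) (w : R * R -> R) : \bar R :=
  ereal_sup ([set 0%E] `|` [set (`|w x|)%:E | x in Om]).

Definition cknorm (k : nat) (Om : set (R * R)) (w : R * R -> R) : \bar R :=
  (\sum_(nu < k.+1) \sum_(mu < (2 * k).+1 | (2 * nu + mu <= 2 * k)%N)
     supnorm Om (pd nu mu w))%E.

End Defs.

(* By the Leibniz rule, d_s^nu d_t^mu (d_t u * v) is a sum of at most 2^(3k)
   products d_s^a d_t^(b+1) u * d_s^(nu-a) d_t^(mu-b) v.  The term with
   (a, b) = (nu, mu) is a derivative of d_t u of parabolic order at most 2k,
   times v, hence bounded by |d_s^nu d_t^mu d_t u| ||v||_oo.  In every other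
   term 2a + b + 1 <= 2k, so the factor coming from u is bounded by ||u||_C^k
   and the factor coming from v is a derivative of parabolic order at most 2k.
   This bounds the integrand of the W^{k,p} norm of d_t u * v pointwise by
   K (||v||_oo^p W(d_t u) + ||u||_C^k^p W(v)), where W is the integrand of the
   W^{k,p} norm; integrating and taking p-th roots gives the estimate with a
   constant depending only on k and p. *)

From HB Require Import structures.
From mathcomp Require Import all_boot all_order all_algebra.
From mathcomp Require Import all_classical all_reals all_analysis.
From mathcomp Require Import zify lra measurable_realfun.
Import Order.TTheory GRing.Theory Num.Theory.
Import numFieldNormedType.Exports.
Local Open Scope classical_set_scope.
Local Open Scope ring_scope.

Set Implicit Arguments. Unset Strict Implicit.

Fixpoint bitseqs (n : nat) : seq bitseq :=
  if n is n'.+1 then map (cons true) (bitseqs n') ++ map (cons false) (bitseqs n')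
  else [:: [::]].

Lemma size_bitseqs n : size (bitseqs n) = (2 ^ n)%N.
Proof. by elim: n => //= n IH; rewrite size_cat !size_map IH expnS mul2n addnn. Qed.

Lemma size_mem_bitseqs n m : m \in bitseqs n -> size m = n.
Proof.
elim: n m => [|n IH] m /=; first by rewrite inE => /eqP ->.
by rewrite mem_cat => /orP[] /mapP[m' /IH <- ->].
Qed.

Lemma mask_nseq_count (T : Type) (y : T) m :
  mask m (nseq (size m) y) = nseq (count id m) y /\
  mask (map negb m) (nseq (size m) y) = nseq (size m - count id m) y.
Proof.
elim: m => [|[] m [IH1 IH2]] //=; rewrite ?IH1 ?IH2 //.
by rewrite add0n subSn ?count_size.
Qed.

Definition pword (nu mu : nat) : bitseq := nseq nu true ++ nseq mu false.

Lemma size_pword nu mu : size (pword nu mu) = (nu + mu)%N.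
Proof. by rewrite size_cat !size_nseq. Qed.

Lemma mask_pword nu mu (m : bitseq) : size m = (nu + mu)%N ->
  exists a b, [/\ (a <= nu)%N, (b <= mu)%N,
    mask m (pword nu mu) = pword a b &
    mask (map negb m) (pword nu mu) = pword (nu - a) (mu - b)].
Proof.
move=> sm; rewrite -(cat_take_drop nu m) map_cat.
have s1 : size (take nu m) = nu by rewrite size_takel // sm leq_addr.
have s2 : size (drop nu m) = mu by rewrite size_drop sm addKn.
exists (count id (take nu m)), (count id (drop nu m)).
have [A1 A2] := mask_nseq_count true (take nu m).
have [B1 B2] := mask_nseq_count false (drop nu m).
rewrite s1 in A1 A2; rewrite s2 in B1 B2.
split.
- by rewrite -{2}s1 count_size.
- by rewrite -s2 count_size.
- by rewrite /pword mask_cat ?size_nseq // A1 B1.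
- by rewrite /pword mask_cat ?size_map ?size_nseq // A2 B2.
Qed.

Section leibniz.
Context {R : realType}.
Implicit Types (Om : set (R * R)) (f g : R * R -> R) (x : R * R).

Lemma derivable_sum_mul (I : Type) (s : seq I) (A B : I -> R -> R) (a : R) :
  (forall i, derivable (A i) a 1) -> (forall i, derivable (B i) a 1) ->
  derivable (fun t => \sum_(i <- s) A i t * B i t) a 1.
Proof.
move=> dA dB; elim: s => [|i s IH].
  under eq_fun do rewrite big_nil; exact: derivable_cst.
under eq_fun do rewrite big_cons.
exact: (derivableD (derivableM (dA i) (dB i)) IH).
Qed.

Lemma derive1_sum_mul (I : Type) (s : seq I) (A B : I -> R -> R) (a : R) :
  (forall i, derivable (A i) a 1) -> (forall i, derivable (B i) a 1) ->
  derive1 (fun t => \sum_(i <- s) A i t * B i t) a =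
  \sum_(i <- s) (derive1 (A i) a * B i a + A i a * derive1 (B i) a).
Proof.
move=> dA dB; elim: s => [|i s IH].
  rewrite big_nil (_ : (fun t => _) = cst 0) ?derive1_cst //.
  by apply/funext => t; rewrite big_nil.
under eq_fun do rewrite big_cons.
rewrite big_cons -IH !derive1E (deriveD (derivableM (dA i) (dB i))).
  by rewrite deriveM // /GRing.scale /= (addrC (A i a * _)) (mulrC (B i a)).
exact: derivable_sum_mul.
Qed.

Definition slice (T : Type) (b : bool) (f : R * R -> T) x : R -> T :=
  if b then fun s => f (s, x.2) else fun t => f (x.1, t).

Definition slice_pt (b : bool) x : R := if b then x.1 else x.2.

Definition dpart (b : bool) f : R * R -> R := if b then ds f else dt f.

Lemma dpartE b f x : dpart b f x = derive1 (slice b f x) (slice_pt b x).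
Proof. by case: b. Qed.

Lemma slice_ptE (T : Type) b (f : R * R -> T) x : slice b f x (slice_pt b x) = f x.
Proof. by case: b; case: x. Qed.

Lemma dword_cons b w f : dword (b :: w) f = dpart b (dword w f).
Proof. by []. Qed.

Lemma near_slice Om b x : open Om -> Om x ->
  \forall t \near slice_pt b x, slice b Om x t.
Proof.
move=> oOm Omx; have /nbhs_ballP[e e0 sub] := open_nbhs_nbhs (conj oOm Omx).
case: b => /=; near=> t; apply: sub; split => /=; try exact: ballxx;
  near: t; by apply/nbhs_ballP; exists e.
Unshelve. all: by end_near. Qed.

Lemma dpart_eq_in Om b f g x : open Om ->
  (forall y, Om y -> f y = g y) -> Om x -> dpart b f x = dpart b g x.
Proof.
move=> oOm fg Omx; rewrite !dpartE !derive1E; apply: near_eq_derive.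
by apply: filterS (near_slice b oOm Omx); case: b => t /fg.
Qed.

Definition partials_derivable Om f :=
  forall w x, Om x -> forall b, derivable (slice b (dword w f) x) (slice_pt b x) 1.

Lemma partials_derivable_dword Om w f :
  partials_derivable Om f -> partials_derivable Om (dword w f).
Proof. by move=> df w' x Omx b; rewrite /dword -foldr_cat; exact: df. Qed.

Lemma smooth_partials_derivable Om f :
  smooth_closure Om f -> partials_derivable Om f.
Proof. by move=> sf w x Omx [] /=; have [/(_ x Omx) [? [? _]] _] := sf w. Qed.

(* The bit sequence [m] chooses which letters of [w] fall on [f]. *)
Lemma dword_mul Om f g : open Om ->
  partials_derivable Om f -> partials_derivable Om g ->
  forall w x, Om x -> dword w (fun y => f y * g y) x =
  \sum_(m <- bitseqs (size w)) dword (mask m w) f x * dword (mask (map negb m) w) g x.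
Proof.
move=> oOm df dg; elim=> [|b w IH] x Omx; first by rewrite /= big_seq1.
rewrite dword_cons (dpart_eq_in b oOm IH Omx) dpartE.
have -> : slice b (fun y => \sum_(m <- bitseqs (size w))
      dword (mask m w) f y * dword (mask (map negb m) w) g y) x =
    (fun t => \sum_(m <- bitseqs (size w))
      slice b (dword (mask m w) f) x t * slice b (dword (mask (map negb m) w) g) x t).
  by case: b.
rewrite derive1_sum_mul => [|m|m]; [|exact: df|exact: dg].
rewrite /= big_cat !big_map /= big_split /=.
by congr (_ + _); apply: eq_bigr => m _; rewrite -dpartE !slice_ptE.
Qed.

End leibniz.

Section parabolic.
Context {R : realType}.
Implicit Types (Om : set (R * R)) (f u v : R * R -> R) (x : R * R).

Lemma pd_dword nu mu f : pd nu mu f = dword (pword nu mu) f.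
Proof.
rewrite /dword /pword foldr_cat.
by elim: nu => [|nu /= ->]; [elim: mu => //= mu ->|].
Qed.

Lemma pd_dt nu mu f : pd nu mu (pd 0 1 f) = pd nu mu.+1 f.
Proof. by rewrite /pd [in RHS]iterSr. Qed.

Lemma le_parabolic_sum k (F : nat -> nat -> R) nu mu :
  (forall i j, 0 <= F i j) -> (2 * nu + mu <= 2 * k)%N ->
  F nu mu <= \sum_(i < k.+1) \sum_(j < (2 * k).+1 | (2 * i + j <= 2 * k)%N) F i j.
Proof.
move=> F0 h.
have hnu : (nu < k.+1)%N by lia.
have hmu : (mu < (2 * k).+1)%N by lia.
rewrite (bigD1 (Ordinal hnu)) //= (bigD1 (Ordinal hmu)) //= -addrA lerDl.
by apply: addr_ge0; apply: sumr_ge0 => i _ //; apply: sumr_ge0.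
Qed.

Definition wdensity (p : R) (k : nat) f x : R :=
  \sum_(nu < k.+1) \sum_(mu < (2 * k).+1 | (2 * nu + mu <= 2 * k)%N)
     `|pd nu mu f x| `^ p.

Lemma wdensity_ge0 p k f x : 0 <= wdensity p k f x.
Proof. by apply: sumr_ge0 => i _; apply: sumr_ge0 => j _; exact: powR_ge0. Qed.

Lemma le_wdensity p k f x nu mu : (2 * nu + mu <= 2 * k)%N ->
  `|pd nu mu f x| `^ p <= wdensity p k f x.
Proof.
by apply: (le_parabolic_sum (F := fun i j => `|pd i j f x| `^ p)) => i j; exact: powR_ge0.
Qed.

Lemma wdensity_measurable Om p k f :
  (forall nu mu, measurable_fun Om (pd nu mu f)) -> measurable_fun Om (wdensity p k f).
Proof.
move=> mf; rewrite (_ : wdensity p k f = fun x => \sum_(nu < k.+1)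
    \sum_(mu < (2 * k).+1) if (2 * nu + mu <= 2 * k)%N then `|pd nu mu f x| `^ p else 0).
  apply: measurable_sum => nu; apply: measurable_sum => mu.
  case: (2 * nu + mu <= 2 * k)%N; last exact: measurable_cst.
  apply: (measurableT_comp (measurable_powR _)).
  by apply: measurableT_comp; [exact: normr_measurable | exact: mf].
by apply/funext => x; apply: eq_bigr => nu _; rewrite big_mkcond.
Qed.

Lemma wnormE p k Om f :
  wnorm p k Om f = ((\int[leb2]_(x in Om) (wdensity p k f x)%:E) `^ p^-1)%E.
Proof. by []. Qed.

Lemma sum_le_size (I : eqType) (s : seq I) (F : I -> R) c :
  (forall i, i \in s -> F i <= c) -> \sum_(i <- s) F i <= (size s)%:R * c.
Proof.
elim: s => [|i s IH] h; first by rewrite big_nil mul0r.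
rewrite big_cons /= -add1n natrD mulrDl mul1r.
by apply: lerD; [apply: h; rewrite mem_head | apply: IH => j js; apply: h; rewrite inE js orbT].
Qed.

Lemma le_powR_inv (p t Q : R) : 0 < p -> 0 <= t -> 0 <= Q ->
  t `^ p <= Q -> t <= Q `^ p^-1.
Proof.
move=> p0 t0 Q0 h.
rewrite -[t]powRr1 // -(mulfV (lt0r_neq0 p0)) powRrM.
by apply: ge0_ler_powR => //; rewrite ?invr_ge0 ?ltW // nnegrE powR_ge0.
Qed.

Lemma ler_powR2r (p a b : R) : 0 <= p -> 0 <= a -> a <= b -> a `^ p <= b `^ p.
Proof. by move=> p0 a0 ab; apply: ge0_ler_powR; rewrite // nnegrE (le_trans a0). Qed.

Definition wconst (p : R) (k : nat) : R :=
  (k.+1 * (2 * k).+1)%:R * ((2 ^ (3 * k))%:R `^ p).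

Lemma wconst_ge0 p k : 0 <= wconst p k.
Proof. by rewrite mulr_ge0 ?powR_ge0. Qed.

Section pointwise.
Variables (Om : set (R * R)) (p : R) (k : nat) (u v : R * R -> R) (x : R * R).
Variables (V M : R).
Hypotheses (p0 : 0 < p) (V0 : 0 <= V) (M0 : 0 <= M) (hV : `|v x| <= V).
Hypothesis hM : forall a b, (2 * a + b <= 2 * k)%N -> `|pd a b u x| <= M.

Let Q := V `^ p * wdensity p k (pd 0 1 u) x + M `^ p * wdensity p k v x.

Let Q0 : 0 <= Q.
Proof. by apply: addr_ge0; apply: mulr_ge0; rewrite ?powR_ge0 ?wdensity_ge0. Qed.

(* Only the term where every derivative falls on [dt u] is not controlled by
   the [C^k] norm of [u]: it has the top order and is paired with [v] itself. *)
Lemma leibniz_term_le nu mu a b : (2 * nu + mu <= 2 * k)%N ->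
  (a <= nu)%N -> (b <= mu)%N ->
  `|pd a b (pd 0 1 u) x| * `|pd (nu - a) (mu - b) v x| <= Q `^ p^-1.
Proof.
move=> hk anu bmu; apply: le_powR_inv; rewrite ?mulr_ge0 // powRM //.
have [/andP[/eqP-> /eqP->]|neq] := boolP ((a == nu) && (b == mu)).
  apply: (le_trans (y := wdensity p k (pd 0 1 u) x * V `^ p)).
    apply: ler_pM; rewrite ?powR_ge0 ?le_wdensity //.
    rewrite !subnn [pd 0 0 v]/=.
    exact: ler_powR2r (ltW p0) (normr_ge0 _) hV.
  by rewrite /Q [X in X <= _]mulrC lerDl mulr_ge0 ?powR_ge0 ?wdensity_ge0.
have hab : (2 * a + b.+1 <= 2 * k)%N.
  by move: neq; rewrite negb_and => /orP[] /eqP; lia.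
apply: (le_trans (y := M `^ p * wdensity p k v x)).
  apply: ler_pM; rewrite ?powR_ge0 //.
    by rewrite pd_dt; apply: ler_powR2r (ltW p0) (normr_ge0 _) (hM hab).
  by apply: le_wdensity; lia.
by rewrite /Q lerDr mulr_ge0 ?powR_ge0 ?wdensity_ge0.
Qed.

Hypotheses (oOm : open Om) (Omx : Om x).
Hypotheses (du : partials_derivable Om (pd 0 1 u)) (dv : partials_derivable Om v).

Lemma pd_mul_le nu mu : (2 * nu + mu <= 2 * k)%N ->
  `|pd nu mu (fun y => pd 0 1 u y * v y) x| <= (2 ^ (3 * k))%:R * Q `^ p^-1.
Proof.
move=> hk; rewrite pd_dword (dword_mul oOm du dv _ Omx).
apply: le_trans (ler_norm_sum _ _ _) _.
apply: le_trans (ler_wpM2r (powR_ge0 _ _) (_ : (2 ^ (nu + mu))%:R <= _)).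
  rewrite size_pword -size_bitseqs; apply: sum_le_size => m.
  move=> /size_mem_bitseqs /mask_pword.
  by move=> [a [b [anu bmu -> ->]]]; rewrite normrM -!pd_dword leibniz_term_le.
by rewrite ler_nat leq_pexp2l //; lia.
Qed.

Lemma wdensity_mul_le :
  wdensity p k (fun y => pd 0 1 u y * v y) x <= wconst p k * Q.
Proof.
apply: (@le_trans _ _ (\sum_(nu < k.+1) \sum_(mu < (2 * k).+1)
   ((2 ^ (3 * k))%:R `^ p * Q))).
  apply: ler_sum => nu _; rewrite big_mkcond /=; apply: ler_sum => mu _.
  case: ifP => hk; last by rewrite mulr_ge0 ?powR_ge0.
  apply: le_trans (ler_powR2r (ltW p0) (normr_ge0 _) (pd_mul_le hk)) _.
  by rewrite powRM ?powR_ge0 // -powRrM mulVf ?gt_eqF // powRr1.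
rewrite !sumr_const !card_ord /wconst -mulrnA -[X in X <= _]mulr_natl mulrA.
by rewrite [(_.+1 * k.+1)%N]mulnC.
Qed.

End pointwise.

End parabolic.

Section plane.
Context {R : realType}.
Implicit Types (Om : set (R * R)) (f : R * R -> R).

Definition rat_box (q : (rat * rat) * (rat * rat)) : set (R * R) :=
  [set` `]ratr q.1.1, ratr q.1.2[] `*` [set` `]ratr q.2.1, ratr q.2.2[].

Lemma rat_box_nbhs x (e : R) : 0 < e ->
  exists q, rat_box q x /\ rat_box q `<=` ball x e.
Proof.
move=> e0.
have between (a : R) : exists2 q : rat * rat, a - e < ratr q.1 < a &
    a < ratr q.2 < a + e.
  have [q1] : exists q : rat, ratr q \in `]a - e, a[.
    by apply: rat_in_itvoo; rewrite ltrBlDr ltrDl.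
  have [q2] : exists q : rat, ratr q \in `]a, a + e[.
    by apply: rat_in_itvoo; rewrite ltrDl.
  by rewrite !in_itv /= => h2 h1; exists (q1, q2).
have [[q1 q2] /andP[a1 b1] /andP[c1 d1]] := between x.1.
have [[q3 q4] /andP[a2 b2] /andP[c2 d2]] := between x.2.
exists ((q1, q2), (q3, q4)); split; first by split; rewrite /= in_itv /= ?b1 ?c1 ?b2 ?c2.
move=> y [/=]; rewrite !in_itv /= => /andP[y1 y2] /andP[y3 y4].
split; rewrite /ball /= ltr_norml; apply/andP; split; lra.
Qed.

(* The product sigma-algebra on [R * R] contains the open sets: every open set
   is the countable union of the rational boxes it contains. *)
Lemma open_measurableR2 Om : open Om -> measurable Om.
Proof.
move=> oOm.
pose F n : set (R * R) := if unpickle n is Some q then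
  (if `[< rat_box q `<=` Om >] then rat_box q else set0) else set0.
have -> : Om = \bigcup_n F n.
  apply/seteqP; split => [x Omx|x [n _]]; last first.
    by rewrite /F; case: (unpickle n) => // q; case: asboolP => // sub /sub.
  have /nbhs_ballP[e /= e0 sub] := open_nbhs_nbhs (conj oOm Omx).
  have [q [qx qsub]] := rat_box_nbhs x e0.
  exists (pickle q); first by [].
  rewrite /F pickleK.
  by case: asboolP => [//|[]]; apply: subset_trans qsub sub.
apply: bigcupT_measurable => n; rewrite /F.
case: (unpickle n) => // q; case: asboolP => // _.
by apply: measurableX; exact: measurable_itv.
Qed.

Lemma open_continuous_measurable_funR2 Om f : open Om ->
  (forall x, Om x -> {for x, continuous f}) -> measurable_fun Om f.
Proof.
move=> oOm cf; apply: (measurability _ (RGenOpens.measurableE R)).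
move=> _ [_ [a [b ->] <-]]; apply: open_measurableR2.
rewrite openE => y [Omy fy].
apply: filterI; first exact: open_nbhs_nbhs.
by apply: (cf y Omy); apply: open_nbhs_nbhs; split => //; exact: interval_open.
Qed.

Lemma compact_closure_bounded Om : bounded_set Om -> compact (closure Om).
Proof.
move=> [M0 [_ /(_ (M0 + 1)) hM]]; have {hM} := hM (ltr_pwDr ltr01 (lexx M0)).
set M := M0 + 1 => hM.
have cl : closed [set x : R * R | `|x| <= M].
  rewrite (_ : [set x | _] = (@Num.norm _ (R * R)%type) @^-1` [set r | r <= M]) //.
  apply: closed_comp; last exact: closed_le.
  by move=> x _; exact: norm_continuous.
apply: (@subclosed_compact _ _ (`[- M, M] `*` `[- M, M])).
- exact: closed_closure.
- by apply: compact_setX; exact: segment_compact.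
- move=> x /(closure_subset hM); rewrite -(closure_id _).1 //= prod_normE.
  by rewrite ge_max => /andP[h1 h2]; split; rewrite /= in_itv /= -ler_norml.
Qed.

Lemma bounded_on_closure Om (g : R * R -> R) :
  bounded_set Om -> {within closure Om, continuous g} ->
  exists2 B, 0 <= B & forall x, Om x -> `|g x| <= B.
Proof.
move=> bOm cg.
have [M0 [_ hM]] := compact_bounded (continuous_compact cg (compact_closure_bounded bOm)).
exists (Num.max M0 0 + 1); first by rewrite addr_ge0 // le_max lexx orbT.
move=> x Omx; apply: hM; first by rewrite ltr_pwDr // le_max lexx.
by exists x => //; exact: subset_closure.
Qed.

Local Open Scope ereal_scope.

Lemma supnorm_ge0 Om f : 0 <= supnorm Om f.
Proof. by apply: ereal_sup_ubound; left. Qed.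

Lemma supnorm_ub Om f x : Om x -> (`|f x|)%:E <= supnorm Om f.
Proof. by move=> Omx; apply: ereal_sup_ubound; right; exists x. Qed.

Lemma supnorm_fin Om f (B : R) : (0 <= B)%R ->
  (forall x, Om x -> (`|f x| <= B)%R) -> supnorm Om f \is a fin_num.
Proof.
move=> B0 hB; rewrite ge0_fin_numE ?supnorm_ge0 //; apply: le_lt_trans (ltry B).
by apply: ge_ereal_sup => _ [->|[x Omx <-]]; rewrite lee_fin ?hB.
Qed.

Lemma supnorm_ub_fine Om f x : supnorm Om f \is a fin_num ->
  Om x -> (`|f x| <= fine (supnorm Om f))%R.
Proof. by move=> ff Omx; rewrite -lee_fin fineK //; exact: supnorm_ub. Qed.

Lemma smooth_supnorm_fin Om f w : bounded_set Om -> smooth_closure Om f ->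
  supnorm Om (dword w f) \is a fin_num.
Proof.
move=> bOm sf; have [_ [g [cg eg]]] := sf w.
have [B B0 hB] := bounded_on_closure bOm cg.
by apply: (supnorm_fin B0) => x Omx; rewrite -eg //; exact: hB.
Qed.

Lemma smooth_measurable Om f w : open Om -> smooth_closure Om f ->
  measurable_fun Om (dword w f).
Proof.
move=> oOm sf; apply: open_continuous_measurable_funR2 oOm _ => x Omx.
by have [/(_ x Omx) [_ [_ ?]] _] := sf w.
Qed.

Lemma cknorm_ge0 k Om f : 0 <= cknorm k Om f.
Proof. by apply: sume_ge0 => nu _; apply: sume_ge0 => mu _; exact: supnorm_ge0. Qed.

Lemma cknormE_fine k Om f : (forall nu mu, supnorm Om (pd nu mu f) \is a fin_num) ->
  cknorm k Om f = (\sum_(nu < k.+1) \sum_(mu < (2 * k).+1 | (2 * nu + mu <= 2 * k)%N)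
     fine (supnorm Om (pd nu mu f)))%:E.
Proof.
move=> ff; rewrite /cknorm -sumEFin; apply: eq_bigr => nu _.
by rewrite -sumEFin; apply: eq_bigr => mu _; rewrite fineK.
Qed.

Lemma le_cknorm k Om f x a b :
  (forall nu mu, supnorm Om (pd nu mu f) \is a fin_num) -> Om x ->
  (2 * a + b <= 2 * k)%N -> (`|pd a b f x| <= fine (cknorm k Om f))%R.
Proof.
move=> ff Omx hab; rewrite cknormE_fine //=.
apply: le_trans (supnorm_ub_fine (ff a b) Omx) _.
apply: (le_parabolic_sum (F := fun i j => fine (supnorm Om (pd i j f)))) => // i j.
exact: fine_ge0 (supnorm_ge0 _ _).
Qed.

End plane.

Lemma powR_addr_le (R : realType) (s t r : R) : 0 <= s -> 0 <= t -> 0 <= r ->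
  (s + t) `^ r <= 2 `^ r * (s `^ r + t `^ r).
Proof.
wlog st : s t / s <= t.
  move=> h s0 t0 r0; have [|/ltW ts] := leP s t; first by move=> st; exact: h.
  by rewrite addrC [_ `^ r + _]addrC; exact: h.
move=> s0 t0 r0; apply: (@le_trans _ _ ((2 * t) `^ r)).
  by apply: ler_powR2r; rewrite ?addr_ge0 // mulr2n mulrDl mul1r lerD2r.
by rewrite powRM // ler_wpM2l ?powR_ge0 // lerDr powR_ge0.
Qed.

Lemma poweR_adde_le (R : realType) (a b : \bar R) (r : R) :
  (0 <= a)%E -> (0 <= b)%E -> 0 < r ->
  ((a + b) `^ r <= (2 `^ r)%:E * (a `^ r + b `^ r))%E.
Proof.
move=> a0 b0 r0; have r2 : 0 < 2 `^ r by rewrite powR_gt0.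
case: a a0 => [s s0|_|//]; case: b b0 => [t t0|_|//].
- rewrite !lee_fin in s0 t0.
  by rewrite -EFinD !poweR_EFin -EFinD -EFinM lee_fin powR_addr_le // ltW.
- by rewrite addey // poweRyr ?gt_eqF // addey ?gt0_muley ?leey.
- by rewrite addye // poweRyr ?gt_eqF // addye ?gt0_muley ?leey.
- by rewrite addye // poweRyr ?gt_eqF // addye ?gt0_muley ?leey.
Qed.

(* Monotonicity of the integral of non-negative functions needs no
   measurability: both sides are suprema over simple minorants. *)
Lemma ge0_le_integral_nomeas d (T : measurableType d) (R : realType)
    (mu : {measure set T -> \bar R}) (D : set T) (f g : T -> \bar R) :
  (forall x, D x -> (0 <= f x)%E) -> (forall x, D x -> (f x <= g x)%E) ->
  (\int[mu]_(x in D) f x <= \int[mu]_(x in D) g x)%E.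
Proof.
move=> f0 fg; have g0 x : D x -> (0 <= g x)%E by move=> Dx; exact: le_trans (f0 x Dx) (fg x Dx).
rewrite !ge0_integralE //; apply: ereal_sup_le => _ [h hf <-].
exists h => // x; apply: le_trans (hf x) _.
by rewrite /patch; case: ifP => // /set_mem /fg.
Qed.

Section root_integral.
Local Open Scope ereal_scope.
Context d (T : measurableType d) (R : realType).
Variables (mu : {measure set T -> \bar R}) (D : set T) (f g h : T -> R).
Variables (p K A B : R).
Hypotheses (mD : measurable D) (mf : measurable_fun D f) (mg : measurable_fun D g).
Hypotheses (f0 : forall x, D x -> (0 <= f x)%R) (g0 : forall x, D x -> (0 <= g x)%R).
Hypothesis h0 : forall x, D x -> (0 <= h x)%R.
Hypotheses (p0 : (0 < p)%R) (K0 : (0 <= K)%R) (A0 : (0 <= A)%R) (B0 : (0 <= B)%R).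
Hypothesis hfg : forall x, D x -> (h x <= K * (A `^ p * f x + B `^ p * g x))%R.

Let integral_le (a b : R) : (0 <= a)%R -> (0 <= b)%R ->
  (forall x, D x -> (h x <= a * f x + b * g x)%R) ->
  \int[mu]_(x in D) (h x)%:E <=
  a%:E * \int[mu]_(x in D) (f x)%:E + b%:E * \int[mu]_(x in D) (g x)%:E.
Proof.
move=> a0 b0 hab.
have mE (F : T -> R) : measurable_fun D F -> measurable_fun D (fun x => (F x)%:E).
  by move=> mF; exact/measurable_EFinP.
rewrite -!ge0_integralZl_EFin //.
rewrite -ge0_integralD.
- apply: ge0_le_integral_nomeas => x Dx; first by rewrite lee_fin h0.
  by rewrite -!EFinM -EFinD lee_fin hab.
all: try by move=> x Dx; apply: mule_ge0; rewrite lee_fin ?f0 ?g0.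
all: by [|exact: mE|apply: measurable_funeM; exact: mE].
Qed.

Lemma root_integral_le :
  (\int[mu]_(x in D) (h x)%:E) `^ p^-1 <= (2 `^ p^-1 * K `^ p^-1)%:E *
    ((\int[mu]_(x in D) (f x)%:E) `^ p^-1 * A%:E +
     B%:E * (\int[mu]_(x in D) (g x)%:E) `^ p^-1).
Proof.
have r0 : (0 < p^-1)%R by rewrite invr_gt0.
set If := \int[mu]_(x in D) (f x)%:E; set Ig := \int[mu]_(x in D) (g x)%:E.
set Ih := \int[mu]_(x in D) (h x)%:E.
have If0 : 0 <= If by apply: integral_ge0 => x /f0.
have Ig0 : 0 <= Ig by apply: integral_ge0 => x /g0.
have Ih0 : 0 <= Ih by apply: integral_ge0 => x /h0.
have KA0 : 0 <= (K * A `^ p)%:E by rewrite lee_fin mulr_ge0 ?powR_ge0.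
have KB0 : 0 <= (K * B `^ p)%:E by rewrite lee_fin mulr_ge0 ?powR_ge0.
have hI : Ih <= (K * A `^ p)%:E * If + (K * B `^ p)%:E * Ig.
  by apply: integral_le; rewrite ?mulr_ge0 ?powR_ge0 // => x Dx; rewrite -!mulrA -mulrDr hfg.
have S0 := adde_ge0 (mule_ge0 KA0 If0) (mule_ge0 KB0 Ig0).
apply: le_trans (gt0_ler_poweR (ltW r0) _ _ hI) _; rewrite ?in_itv /= ?leey ?Ih0 ?S0 //.
apply: le_trans (poweR_adde_le (mule_ge0 KA0 If0) (mule_ge0 KB0 Ig0) r0) _.
have root_pow (X : R) : (0 <= X)%R -> ((K * X `^ p) `^ p^-1 = K `^ p^-1 * X)%R.
  by move=> X0; rewrite powRM ?powR_ge0 // -powRrM mulfV ?gt_eqF // powRr1.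
rewrite (poweRM _ KA0 If0) (poweRM _ KB0 Ig0) !poweR_EFin !root_pow //.
rewrite [in X in _ <= X]EFinM -[in X in _ <= X]muleA lee_pmul2l ?lte_fin ?powR_gt0 //.
rewrite ge0_muleDr ?mule_ge0 ?poweR_ge0 ?lee_fin // EFinM -muleA [A%:E * _]muleC.
by rewrite EFinM -muleA.
Qed.

End root_integral.

Theorem mainTheorem9 (R : realType) (p : R) (hp : 2 < p) (k : nat)
  (hk : (1 <= k)%N) (A : R) :
  exists c : R, forall Om : set (R * R),
    open Om -> bounded_set Om -> leb2 Om = A%:E ->
    forall u v : R * R -> R, smooth_closure Om u -> smooth_closure Om v ->
    (wnorm p k Om (fun x => (pd 0 1 u x * v x)%R)
     <= c%:E * (wnorm p k Om (pd 0 1 u) * supnorm Om v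
                + cknorm k Om u * wnorm p k Om v))%E.
Proof.
have p0 : 0 < p by apply: lt_trans hp.
exists (2 `^ p^-1 * wconst p k `^ p^-1) => Om oOm bOm _ u v su sv.
have du : partials_derivable Om (pd 0 1 u) :=
  partials_derivable_dword (w := [:: false]) (smooth_partials_derivable su).
have dv := smooth_partials_derivable sv.
have mpd f : smooth_closure Om f -> forall nu mu, measurable_fun Om (pd nu mu f).
  by move=> sf nu mu; rewrite pd_dword; exact: smooth_measurable.
have fin_u nu mu : supnorm Om (pd nu mu u) \is a fin_num.
  by rewrite pd_dword; exact: smooth_supnorm_fin.
have fin_v : supnorm Om v \is a fin_num := smooth_supnorm_fin [::] bOm sv.
have fin_cu : cknorm k Om u \is a fin_num by rewrite cknormE_fine.
rewrite !wnormE -(fineK fin_v) -(fineK fin_cu).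
apply: root_integral_le; rewrite ?wconst_ge0 ?fine_ge0 ?supnorm_ge0 ?cknorm_ge0 //;
  try by move=> x _; exact: wdensity_ge0.
- exact: open_measurableR2.
- by apply: wdensity_measurable => nu mu; rewrite pd_dt; exact: mpd.
- exact: wdensity_measurable (mpd v sv).
move=> x Omx; apply: (wdensity_mul_le (Om := Om)) => //.
- by rewrite fine_ge0 ?supnorm_ge0.
- by rewrite fine_ge0 ?cknorm_ge0.
- exact: supnorm_ub_fine.
- by move=> a b; exact: le_cknorm.
Qed.
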